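(* Let $n\ge 2$, let $2\le k\le n$, and let $\alpha_k,\alpha_{k+1},\ldots,\alpha_n\in\mathbb{C}$. Let $\mathbf{A}$ and $\mathbf{B}$ be two cyclic Leibniz algebras over $\mathbb{C}$ of dimension $n$. Assume $\mathbf{A}$ has a cyclic generator $a$ satisfying $$aa^n=\alpha_k a^k+\alpha_{k+1}a^{k+1}+\cdots+\alpha_n a^n.$$ Then $\mathbf{A}$ is isomorphic to $\mathbf{B}$ (as algebras) if and only if $\mathbf{B}$ has a cyclic generator $b$ satisfying $$bb^n=\alpha_k b^k+\alpha_{k+1}b^{k+1}+\cdots+\alpha_n b^n.$$
   Context: A (left) Leibniz algebra is a vector space with a bilinear product such that left multiplication by every element is a derivation: $x(yz)=(xy)z+y(xz)$ for all $x,y,z$. A cyclic Leibniz algebra is a Leibniz algebra generated (as an algebra) by a single element. For an element $x$ one sets $x^1=x$ and $x^{j+1}=x\,x^j$ (left multiplication by $x$ applied $j$ times to $x$). An element $x$ of an $n$-dimensional cyclic Leibniz algebra is called a cyclic generator (or generator) if $\{x,x^2,\ldots,x^n\}$ is a basis of the algebra. *)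

From HB Require Import structures.
From mathcomp Require Import all_boot all_order all_algebra.
From mathcomp Require Import reals.
From mathcomp Require Import complex.
Set Implicit Arguments. Unset Strict Implicit. Unset Printing Implicit Defensive.
Import Order.TTheory GRing.Theory Num.Theory.
Local Open Scope ring_scope.

(* The complex numbers, built as R[i] over a model R of the reals
   (any realType is a complete archimedean ordered field, i.e. is R). *)
Definition CC (R : realType) : fieldType := (complex R : numClosedFieldType).

Section Leibniz.
Variables (F : fieldType) (V : vectType F).

Definition bilinear_prod (mul : V -> V -> V) : Prop :=
  (forall (c : F) (x y z : V), mul (c *: x + y) z = c *: mul x z + mul y z) /\
  (forall (c : F) (x y z : V), mul x (c *: y + z) = c *: mul x y + mul x z).

Definition left_leibniz (mul : V -> V -> V) : Prop :=
  forall x y z : V, mul x (mul y z) = mul (mul x y) z + mul y (mul x z).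

Definition leibniz_algebra (mul : V -> V -> V) : Prop :=
  bilinear_prod mul /\ left_leibniz mul.

Definition lpow (mul : V -> V -> V) (x : V) (j : nat) : V :=
  iter j.-1 (mul x) x.

Definition generates (mul : V -> V -> V) (x : V) : Prop :=
  forall U : {vspace V}, x \in U ->
    (forall u v, u \in U -> v \in U -> mul u v \in U) -> U = fullv.

Definition cyclic_algebra (mul : V -> V -> V) : Prop :=
  exists x : V, generates mul x.

Definition cyclic_generator (mul : V -> V -> V) (n : nat) (x : V) : Prop :=
  basis_of fullv (mkseq (fun i => lpow mul x i.+1) n).

End Leibniz.

Definition alg_iso (F : fieldType) (V W : vectType F)
  (mulV : V -> V -> V) (mulW : W -> W -> W) (f : V -> W) : Prop :=
  (forall (c : F) (x y : V), f (c *: x + y) = c *: f x + f y) /\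
  bijective f /\
  (forall x y : V, f (mulV x y) = mulW (f x) (f y)).

Definition isomorphic (F : fieldType) (V W : vectType F)
  (mulV : V -> V -> V) (mulW : W -> W -> W) : Prop :=
  exists f : V -> W, alg_iso mulV mulW f.

(* In a left Leibniz algebra the identity x(xz) = (xx)z + x(xz) gives x^2 z = 0, and
   inductively x^j z = 0 for all j >= 2; so u v = c (a v), where c is the coefficient of
   a in u on the basis a, ..., a^n. Products are therefore determined by left
   multiplication by the generator a, which sends a^i to a^(i+1) for i < n and a^n to
   the prescribed combination. Hence, when a and b satisfy the same relation, the linear
   map sending a^i to b^i is an algebra isomorphism; conversely an isomorphism carries
   a to a generator satisfying the same relation. *)

From HB Require Import structures.
From mathcomp Require Import all_boot all_order all_algebra.
From mathcomp Require Import reals complex.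
Import GRing.Theory.
Set Implicit Arguments. Unset Strict Implicit.
Local Open Scope ring_scope.

Lemma linear_basis_ext (F : fieldType) (V W : vectType F) (f g : {linear V -> W})
    (X : seq V) :
  basis_of fullv X -> (forall i, (i < size X)%N -> f X`_i = g X`_i) -> f =1 g.
Proof.
move=> bX fgX v; rewrite (coord_basis (X := in_tuple X) bX (memvf v)) !linear_sum.
by apply: eq_bigr => i _; rewrite !linearZ /= fgX.
Qed.

Lemma linear_basis_cancel (F : fieldType) (V W : vectType F)
    (f : {linear V -> W}) (g : {linear W -> V}) (X : seq V) :
  basis_of fullv X -> map g (map f X) = X -> cancel f g.
Proof.
move=> bX gfX; apply: (@linear_basis_ext _ _ _ (g \o f) idfun _ bX) => i ltiX.
by rewrite /= -(nth_map 0 0 f) // -(nth_map 0 0 g) ?size_map // gfX.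
Qed.

Lemma linear_iso_of_bases (F : fieldType) (V W : vectType F) (X : seq V) (Y : seq W) :
  basis_of fullv X -> basis_of fullv Y -> size X = size Y ->
  exists2 f : {linear V -> W}, map f X = Y & bijective f.
Proof.
move=> bX bY szXY.
have [f /(_ (basis_free bX) (esym szXY)) fXY] := linear_of_free X Y.
have [g /(_ (basis_free bY) szXY) gYX] := linear_of_free Y X.
exists f => //; exists g.
  by apply: (linear_basis_cancel bX); rewrite fXY.
by apply: (linear_basis_cancel bY); rewrite gYX.
Qed.

Lemma basis_of_map_inj (F : fieldType) (V W : vectType F) (f : {linear V -> W})
    (X : seq V) :
  injective f -> basis_of fullv X -> (\dim {:W} <= size X)%N ->
  basis_of fullv (map f X).
Proof.
move=> f_inj bX dimW; rewrite basisEfree subvf size_map dimW !andbT.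
have /lker0P/eqP f_ker0 : injective (linfun f) by move=> u v; rewrite !lfunE; apply: f_inj.
have := limg_basis_of (f := linfun f) _ bX; rewrite capfv f_ker0 => /(_ erefl).
by move/basis_free; rewrite (eq_map (lfunE f)).
Qed.

Local Notation lpows mul x n := (mkseq (fun i => lpow mul x i.+1) n).

Definition power_relation (F : fieldType) (V : vectType F) (mul : V -> V -> V)
    (n k : nat) (alpha : nat -> F) (x : V) : Prop :=
  mul x (lpow mul x n) = \sum_(k <= i < n.+1) alpha i *: lpow mul x i.

Lemma lpow_morph (F : fieldType) (V W : vectType F)
    (mulA : V -> V -> V) (mulB : W -> W -> W) (f : V -> W) :
  {morph f : x y / mulA x y >-> mulB x y} ->
  forall x m, f (lpow mulA x m) = lpow mulB (f x) m.
Proof.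
move=> f_mul x [|m] //; rewrite /lpow /=.
by elim: m => [|m IHm] //=; rewrite f_mul IHm.
Qed.

Section BilinearProduct.
Variables (F : fieldType) (V : vectType F) (mul : V -> V -> V).
Hypothesis mul_bilinear : bilinear_prod mul.

Definition mul_left (x : V) : {linear V -> V} :=
  HB.pack (mul x) (GRing.isLinear.Build F V V *:%R (mul x)
    (fun c y z => mul_bilinear.2 c x y z)).

Definition mul_right (z : V) : {linear V -> V} :=
  HB.pack (mul^~ z) (GRing.isLinear.Build F V V *:%R (mul^~ z)
    (fun c x y => mul_bilinear.1 c x y z)).

Hypothesis mul_leibniz : left_leibniz mul.

Lemma lpowSS_mul0 x m z : mul (lpow mul x m.+2) z = 0.
Proof.
have mulx0 : mul x 0 = 0 := linear0 (mul_left x).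
elim: m z => [|m IHm] z.
  by apply: (addIr (mul x (mul x z))); rewrite add0r -mul_leibniz.
by have := mul_leibniz x (lpow mul x m.+2) z; rewrite !IHm mulx0 addr0.
Qed.

End BilinearProduct.

Section ForwardTransport.
Variables (F : fieldType) (V W : vectType F).
Variables (mulA : V -> V -> V) (mulB : W -> W -> W) (f : {linear V -> W}).
Hypothesis f_mul : {morph f : x y / mulA x y >-> mulB x y}.

Lemma power_relation_morph n k alpha x :
  power_relation mulA n k alpha x -> power_relation mulB n k alpha (f x).
Proof.
move=> x_rel; rewrite /power_relation -(lpow_morph f_mul) -f_mul x_rel linear_sum.
by apply: eq_bigr => i _; rewrite linearZ (lpow_morph f_mul).
Qed.

Lemma cyclic_generator_morph n x :
  injective f -> (\dim {:W} <= n)%N ->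
  cyclic_generator mulA n x -> cyclic_generator mulB n (f x).
Proof.
move=> f_inj dimW x_gen; rewrite /cyclic_generator.
have -> : lpows mulB (f x) n = map f (lpows mulA x n).
  by rewrite -map_comp; apply: eq_map => i; rewrite /= (lpow_morph f_mul).
by apply: basis_of_map_inj; rewrite ?size_mkseq.
Qed.

End ForwardTransport.

Section PowerRelationIsomorphism.
Variables (F : fieldType) (V W : vectType F).
Variables (mulA : V -> V -> V) (mulB : W -> W -> W).
Hypotheses (mulA_bilinear : bilinear_prod mulA) (mulA_leibniz : left_leibniz mulA).
Hypotheses (mulB_bilinear : bilinear_prod mulB) (mulB_leibniz : left_leibniz mulB).
Variables (n k : nat) (alpha : nat -> F) (a : V) (b : W).
Hypotheses (n_gt0 : (0 < n)%N).
Hypotheses (a_gen : cyclic_generator mulA n a) (b_gen : cyclic_generator mulB n b).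
Hypotheses (a_rel : power_relation mulA n k alpha a).
Hypotheses (b_rel : power_relation mulB n k alpha b).

Section LinearMap.
Variable f : {linear V -> W}.
Hypothesis f_lpows : map f (lpows mulA a n) = lpows mulB b n.

Lemma map_lpow m : (m <= n)%N -> f (lpow mulA a m) = lpow mulB b m.
Proof.
have f_lpowS j : (j < n)%N -> f (lpow mulA a j.+1) = lpow mulB b j.+1.
  move=> ltjn; have := congr1 (nth 0 ^~ j) f_lpows.
  by rewrite (nth_map 0) ?size_mkseq // !nth_mkseq.
(* [lpow x 0 = x], so the case m = 0 is the case m = 1. *)
by case: m => [_|m]; [exact: (f_lpowS 0 n_gt0) | exact: f_lpowS].
Qed.

Lemma map_mul_generator v : f (mulA a v) = mulB b (f v).
Proof.
apply: (@linear_basis_ext _ _ _ (f \o mul_left mulA_bilinear a)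
  (mul_left mulB_bilinear b \o f) _ a_gen) => i; rewrite size_mkseq => ltin.
rewrite /= !nth_mkseq // (map_lpow ltin).
have [ltin1 | lein1] := ltnP i.+1 n; first exact: (map_lpow ltin1).
have -> : i.+1 = n by apply/eqP; rewrite eqn_leq ltin lein1.
rewrite a_rel b_rel linear_sum; apply: eq_big_nat => j /andP[_ ltjn].
by rewrite linearZ map_lpow.
Qed.

Lemma map_mul u v : f (mulA u v) = mulB (f u) (f v).
Proof.
apply: (@linear_basis_ext _ _ _ (f \o mul_right mulA_bilinear v)
  (mul_right mulB_bilinear (f v) \o f) _ a_gen) => i; rewrite size_mkseq => ltin.
rewrite /= !nth_mkseq // (map_lpow ltin).
case: i ltin => [|i] _; first exact: map_mul_generator.
by rewrite (lpowSS_mul0 mulA_bilinear mulA_leibniz) linear0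
  (lpowSS_mul0 mulB_bilinear mulB_leibniz).
Qed.

End LinearMap.

Lemma isomorphic_of_power_relation : isomorphic mulA mulB.
Proof.
have [|f f_lpows f_bij] := linear_iso_of_bases a_gen b_gen; first by rewrite !size_mkseq.
by exists f; split; [exact: linearP | split; [exact: f_bij | exact: map_mul]].
Qed.

End PowerRelationIsomorphism.

Theorem lemma3p1 (R : realType) (n k : nat) (alpha : nat -> CC R)
  (V W : vectType (CC R)) (mulA : V -> V -> V) (mulB : W -> W -> W) :
  (2 <= n)%N -> (2 <= k <= n)%N ->
  leibniz_algebra mulA -> cyclic_algebra mulA -> \dim (fullv : {vspace V}) = n ->
  leibniz_algebra mulB -> cyclic_algebra mulB -> \dim (fullv : {vspace W}) = n ->
  forall a : V, cyclic_generator mulA n a ->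
    mulA a (lpow mulA a n) = \sum_(k <= i < n.+1) alpha i *: lpow mulA a i ->
  (isomorphic mulA mulB <->
   exists b : W, cyclic_generator mulB n b /\
     mulB b (lpow mulB b n) = \sum_(k <= i < n.+1) alpha i *: lpow mulB b i).
Proof.
move=> n_ge2 _ [mulA_bil mulA_leib] _ _ [mulB_bil mulB_leib] _ dimW a a_gen a_rel.
split=> [[f [f_lin [[g fK _] f_mul]]] | [b [b_gen b_rel]]].
  pose fL : {linear V -> W} := HB.pack f (GRing.isLinear.Build _ _ _ _ f f_lin).
  exists (fL a); split; last exact: power_relation_morph.
  by apply: cyclic_generator_morph => //; [exact: can_inj fK | rewrite dimW].
have n_gt0 : (0 < n)%N by apply: leq_trans n_ge2.
exact: (isomorphic_of_power_relation mulA_bil mulA_leib mulB_bil mulB_leib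
  n_gt0 a_gen b_gen a_rel b_rel).
Qed.
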